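(* Let $(S,K,I)$ be a split graph and let $P=v_1\ldots v_n$, with $n\geq 2$, be an induced path in the factor graph $\Phi(S)$. Then $\max\{d_i: i\in[n]\}\in\{d_1,d_2,d_{n-1},d_n\}$. Moreover, if $\max\{d_i:i\in[n]\}=d_1$, then: (1) for each $i\geq 1$: $d_i\geq d_j$ and $N_i\supseteq N_j$ for all $j$ with $i+2\leq j\leq n$; (2) for each $i\geq 1$: $N_i\supseteq\bigcup_{j=i+2}^n N_j$; in particular $\bigcup_{i=1}^n N_i=N_1\cup N_2$; (3) $d_{2k}\geq d_{2k+2}$ and $d_{2k-1}\geq d_{2k+1}$ for all $k\geq 1$ (whenever the indices are at most $n$); (4) $\min\{d_i: i\in[n]\}\in\{d_{n-1},d_n\}$.
   Context: A split graph $(S,K,I)$ is a graph $S$ together with a fixed partition $V(S)=K\dot\cup I$, where $K$ is a clique and $I$ is an independent set. For a vertex $v_i$ of $S$, $N_i$ denotes its open neighborhood in $S$ and $d_i=|N_i|$ its degree in $S$; for $u,v$ write $\eta_{uv}=|N_u\cap N_v|$. The factor graph $\Phi(S)$ is the loopless multigraph with vertex set $I$ in which, for distinct $u,v\in I$, there is one edge joining $u$ and $v$ for each 2-switch of $S$ acting on $u$ and $v$ (a 2-switch replaces edges $ab,cd$ with $ac,bd$ when $ab,cd\in E(S)$ and $ac,bd\notin E(S)$); equivalently, the multiplicity of the edge $uv$ is $\sigma_{uv}=(d_u-\eta_{uv})(d_v-\eta_{uv})$, and $u,v$ are adjacent iff $\sigma_{uv}>0$. An induced path $v_1\ldots v_n$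 in $\Phi(S)$ consists of distinct vertices with consecutive ones adjacent and no other pair adjacent (multiplicities ignored for adjacency). *)

From mathcomp Require Import all_boot.
Set Implicit Arguments. Unset Strict Implicit. Unset Printing Implicit Defensive.

Definition simple_graph (T : finType) (e : rel T) : Prop :=
  (forall x, ~~ e x x) /\ (forall x y, e x y = e y x).

Definition split_graph (T : finType) (e : rel T) (K I : {set T}) : Prop :=
  [/\ simple_graph e,
      K :|: I = [set: T],
      [disjoint K & I],
      (forall x y, x \in K -> y \in K -> x != y -> e x y) &
      (forall x y, x \in I -> y \in I -> ~~ e x y)].

Definition nbhd (T : finType) (e : rel T) (v : T) : {set T} := [set u | e v u].
Definition deg (T : finType) (e : rel T) (v : T) : nat := #|nbhd e v|.
Definition eta (T : finType) (e : rel T) (u v : T) : nat :=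
  #|nbhd e u :&: nbhd e v|.

(* multiplicity of the edge uv in the factor graph Phi(S) *)
Definition sigma (T : finType) (e : rel T) (u v : T) : nat :=
  (deg e u - eta e u v) * (deg e v - eta e u v).

Definition phi_adj (T : finType) (e : rel T) (I : {set T}) (u v : T) : bool :=
  [&& u \in I, v \in I, u != v & 0 < sigma e u v].

Definition induced_path (T : finType) (e : rel T) (I : {set T})
    (n : nat) (v : nat -> T) : Prop :=
  [/\ forall i, 1 <= i <= n -> v i \in I,
      forall i j, 1 <= i <= n -> 1 <= j <= n -> v i = v j -> i = j,
      forall i, 1 <= i < n -> phi_adj e I (v i) (v i.+1) &
      forall i j, 1 <= i -> i.+1 < j <= n -> ~~ phi_adj e I (v i) (v j)].

From mathcomp Require Import all_boot zify.
Set Implicit Arguments. Unset Strict Implicit. Unset Printing Implicit Defensive.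

(* sigma u v vanishes exactly when N_u and N_v are nested, so along an induced
   path of Phi(S) consecutive neighbourhoods are incomparable while those two
   or more steps apart are comparable; in a comparable pair the set of larger
   degree contains the other.  A vertex v_m of maximum degree with
   3 <= m <= n - 2 would thus contain N_{m-2} and N_{m+2}, and each way of
   comparing N_{m-1} with N_{m+1} then forces an inclusion between consecutive
   neighbourhoods.  If d_1 is maximum, N_j is contained in N_1 for j >= 3, and
   induction along the path gives N_j contained in N_i whenever j >= i + 2. *)

Definition nested (T : finType) (A B : {set T}) : bool :=
  (A \subset B) || (B \subset A).

Lemma nestedC (T : finType) (A B : {set T}) : nested A B = nested B A.
Proof. by rewrite /nested orbC. Qed.

Lemma nested_refl (T : finType) (A : {set T}) : nested A A.
Proof. by rewrite /nested subxx. Qed.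

Lemma nested_card_subset (T : finType) (A B : {set T}) :
  nested A B -> #|A| <= #|B| -> A \subset B.
Proof. by case/orP=> // sBA; rewrite (geq_leqif (subset_leqif_card sBA)). Qed.

Lemma subn_card_setI_eq0 (T : finType) (A B : {set T}) :
  (#|A| - #|A :&: B| == 0) = (A \subset B).
Proof.
by rewrite subn_eq0 (geq_leqif (subset_leqif_card (subsetIl A B))) subsetIidl.
Qed.

Lemma sigma_eq0 (T : finType) (e : rel T) (u v : T) :
  (sigma e u v == 0) = nested (nbhd e u) (nbhd e v).
Proof.
by rewrite /sigma /eta /deg muln_eq0 subn_card_setI_eq0 setIC subn_card_setI_eq0.
Qed.

Lemma phi_adj_not_nested (T : finType) (e : rel T) (I : {set T}) (u v : T) :
  phi_adj e I u v -> ~~ nested (nbhd e u) (nbhd e v).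
Proof. by case/and4P=> _ _ _; rewrite lt0n sigma_eq0. Qed.

Lemma not_phi_adj_nested (T : finType) (e : rel T) (I : {set T}) (u v : T) :
  u \in I -> v \in I -> ~~ phi_adj e I u v -> nested (nbhd e u) (nbhd e v).
Proof.
rewrite /phi_adj => -> -> /=; case: eqVneq => [->|_] /=.
  by rewrite nested_refl.
by rewrite lt0n sigma_eq0 negbK.
Qed.

Lemma bigmax_nat_attained m n (F : nat -> nat) : m < n ->
  exists2 k, m <= k < n & \max_(m <= i < n) F i = F k.
Proof.
move=> lt_mn; rewrite big_geq_mkord (bigmax_eq_arg (Ordinal lt_mn)) //=.
by case: arg_maxnP => //= k m_le_k _; exists k; rewrite ?m_le_k ?ltn_ord.
Qed.

Lemma geq_bigminn_seq (r : seq nat) (F : nat -> nat) x0 k :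
  k \in r -> \big[minn/x0]_(i <- r) F i <= F k.
Proof.
elim: r => [//|a r IH]; rewrite inE big_cons => /predU1P[->|/IH].
  exact: geq_minl.
exact: leq_trans (geq_minr _ _).
Qed.

Section InducedPath.

Variables (T : finType) (e : rel T) (I : {set T}) (n : nat) (v : nat -> T).
Hypothesis path_v : induced_path e I n v.

Lemma induced_path_adjacent_not_nested i :
  1 <= i < n -> ~~ nested (nbhd e (v i)) (nbhd e (v i.+1)).
Proof. by case: path_v => _ _ adj _ /adj/phi_adj_not_nested. Qed.

Lemma induced_path_distant_nested i j :
  1 <= i -> i + 2 <= j <= n -> nested (nbhd e (v i)) (nbhd e (v j)).
Proof.
case: path_v => inI _ _ nonadj i_ge1 j_in.
by apply: not_phi_adj_nested; [apply: inI | apply: inI | apply: nonadj]; lia.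
Qed.

End InducedPath.

Section NestingPattern.

Variables (T : finType) (n : nat) (N : nat -> {set T}).
Hypothesis adjacent_not_nested :
  forall i, 1 <= i < n -> ~~ nested (N i) (N i.+1).
Hypothesis distant_nested :
  forall i j, 1 <= i -> i + 2 <= j <= n -> nested (N i) (N j).

Lemma no_interior_peak i : 1 <= i -> i + 4 <= n ->
  N i \subset N i.+2 -> N i.+4 \subset N i.+2 -> False.
Proof.
move=> i_ge1 i_le sub_l sub_r.
have adj k : i <= k < i + 4 -> ~~ (N k \subset N k.+1) && ~~ (N k.+1 \subset N k).
  by move=> k_in; rewrite -negb_or; apply: adjacent_not_nested; lia.
have far k l : i <= k -> k + 2 <= l <= i + 4 -> nested (N k) (N l).
  by move=> k_ge l_in; apply: distant_nested; lia.
have [s13|s31] := orP (far i.+1 i.+3 ltac:(lia) ltac:(lia)).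
- have [s14|s41] := orP (far i.+1 i.+4 ltac:(lia) ltac:(lia)).
  + have /andP[/negP[]] := adj i.+1 ltac:(lia); exact: subset_trans s14 sub_r.
  + have /andP[_ /negP[]] := adj i.+3 ltac:(lia); exact: subset_trans s41 s13.
- have [s03|s30] := orP (far i i.+3 ltac:(lia) ltac:(lia)).
  + have /andP[/negP[]] := adj i ltac:(lia); exact: subset_trans s03 s31.
  + have /andP[_ /negP[]] := adj i.+2 ltac:(lia); exact: subset_trans s30 sub_l.
Qed.

Lemma largest_at_ends m : 1 <= m <= n ->
  (forall j, 1 <= j <= n -> #|N j| <= #|N m|) -> m \in [:: 1; 2; n.-1; n].
Proof.
move=> m_in m_largest; rewrite !inE; apply/negPn/negP.
move=> /norP[m1 /norP[m2 /norP[m3 m4]]].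
have [i def_m] : exists i, m = i.+2 by exists m.-2; lia.
have sub_m j : 1 <= j <= n -> j + 2 <= m \/ m + 2 <= j -> N j \subset N m.
  move=> j_in j_far; apply: nested_card_subset (m_largest j j_in).
  by case: j_far => ?; [|rewrite nestedC]; apply: distant_nested; lia.
by subst m; apply: (@no_interior_peak i); try apply: sub_m; lia.
Qed.

Section FirstLargest.

Hypothesis first_largest : forall j, 1 <= j <= n -> #|N j| <= #|N 1|.

Lemma first_largest_distant_subset i j :
  1 <= i -> i + 2 <= j <= n -> N j \subset N i.
Proof.
elim: i j => [//|[|i] IH] j _ j_in.
  apply: nested_card_subset; last by apply: first_largest; lia.
  by rewrite nestedC; apply: distant_nested; lia.
have sub_ji : N j \subset N i.+1 by apply: IH; lia.
have [sub_ij|//] := orP (@distant_nested i.+2 j ltac:(lia) ltac:(lia)).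
have /norP[_ /negP[]] := @adjacent_not_nested i.+1 ltac:(lia).
exact: subset_trans sub_ij sub_ji.
Qed.

Lemma first_largest_bigcup_subset i :
  1 <= i -> \bigcup_(i + 2 <= j < n.+1) N j \subset N i.
Proof.
move=> i_ge1; rewrite big_geq_mkord; apply/bigcupsP=> j j_far.
by apply: first_largest_distant_subset; have := ltn_ord j; lia.
Qed.

Lemma first_largest_bigcup :
  2 <= n -> \bigcup_(1 <= i < n.+1) N i = N 1 :|: N 2.
Proof.
move=> n_ge2; rewrite big_ltn ?ltnS ?(ltnW n_ge2) // big_ltn ?ltnS // setUA.
apply/setUidPl.
exact: subset_trans (@first_largest_bigcup_subset 1 isT) (subsetUl _ _).
Qed.

Lemma last_two_smallest i : 1 <= i <= n -> minn #|N n.-1| #|N n| <= #|N i|.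
Proof.
move=> i_in; have [i_far|i_near] := ltnP i n.-1.
  apply: leq_trans (geq_minr _ _) (subset_leq_card _).
  by apply: first_largest_distant_subset; lia.
have [->|i_ne] := eqVneq i n; first exact: geq_minr.
have -> : i = n.-1 by lia.
exact: geq_minl.
Qed.

Lemma first_largest_bigmin : 2 <= n ->
  \big[minn/#|N 1|]_(1 <= i < n.+1) #|N i| = minn #|N n.-1| #|N n|.
Proof.
move=> n_ge2; apply/anti_leq/andP; split.
  by rewrite leq_min !geq_bigminn_seq // mem_index_iota; lia.
rewrite big_seq; apply: (big_ind (fun x => minn #|N n.-1| #|N n| <= x)).
- by apply: last_two_smallest; lia.
- by move=> x y x_ge y_ge; rewrite leq_min x_ge y_ge.
- by move=> i; rewrite mem_index_iota; apply: last_two_smallest.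
Qed.

End FirstLargest.

End NestingPattern.

Theorem theorem2p4 (T : finType) (e : rel T) (K I : {set T})
    (n : nat) (v : nat -> T) :
  split_graph e K I -> 2 <= n -> induced_path e I n v ->
  let d i := deg e (v i) in
  let N i := nbhd e (v i) in
  (\max_(1 <= i < n.+1) d i \in [:: d 1; d 2; d n.-1; d n]) /\
  (\max_(1 <= i < n.+1) d i = d 1 ->
     [/\ (* (1) *)
         (forall i j, 1 <= i -> i + 2 <= j <= n ->
            d j <= d i /\ N j \subset N i),
         (* (2) *)
         (forall i, 1 <= i <= n ->
            \bigcup_(i + 2 <= j < n.+1) N j \subset N i),
         \bigcup_(1 <= i < n.+1) N i = N 1 :|: N 2,
         (* (3) *)
         (forall k, 1 <= k ->
            (2 * k + 2 <= n -> d (2 * k + 2) <= d (2 * k)) /\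
            (2 * k + 1 <= n -> d (2 * k + 1) <= d (2 * k - 1))) &
         (* (4) *)
         \big[minn/d 1]_(1 <= i < n.+1) d i \in [:: d n.-1; d n]]).
Proof.
move=> _ n_ge2 path_v d N.
have adj := induced_path_adjacent_not_nested path_v.
have far := induced_path_distant_nested path_v.
have le_max j : 1 <= j <= n -> d j <= \max_(1 <= i < n.+1) d i.
  by move=> j_in; apply: leq_bigmax_seq => //; rewrite mem_index_iota; lia.
split.
  have [m m_in max_m] := bigmax_nat_attained d (leqW n_ge2).
  rewrite max_m; apply: (@map_f _ _ d [:: 1; 2; n.-1; n]).
  apply: (largest_at_ends (N := N) adj far) => // j j_in.
  by rewrite -[#|N m|]/(d m) -max_m le_max.
move=> max_first.
have first_largest j : 1 <= j <= n -> #|N j| <= #|N 1|.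
  by rewrite -[#|N 1|]/(d 1) -max_first; apply: le_max.
have sub := first_largest_distant_subset (N := N) adj far first_largest.
have le_d i j : 1 <= i -> i + 2 <= j <= n -> d j <= d i.
  by move=> i_ge1 j_in; apply/subset_leq_card/sub.
split.
- by move=> i j i_ge1 j_in; split; [apply: le_d | apply: sub].
- move=> i /andP[i_ge1 _].
  exact: (first_largest_bigcup_subset (N := N) adj far first_largest i_ge1).
- exact: (first_largest_bigcup (N := N) adj far first_largest n_ge2).
- by move=> k k_ge1; split=> k_le; apply: le_d; lia.
have -> : \big[minn/d 1]_(1 <= i < n.+1) d i = minn (d n.-1) (d n).
  exact: (first_largest_bigmin (N := N) adj far first_largest n_ge2).
by rewrite /minn; case: ltnP; rewrite !inE eqxx ?orbT.
Qed.
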